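(* Let $n\ge 2$, let $a_1,\dots,a_n>0$ and $b_1,\dots,b_n\in\mathbb{R}$, and consider the decoupled linear vector field $\dot x_j=-a_jx_j+b_j$ ($j=1,\dots,n$) on $\mathbb{R}^n$, with equilibrium point $x_e=(b_1/a_1,\dots,b_n/a_n)$. Let $\mu_2=\{x\in\mathbb{R}^n : x_{j,\min}\le x_j\le x_{j,\max},\ j=1,\dots,n\}$ be a box (the phase constraint), and let $\lambda\subseteq\mu_2$ be a jump-set. Define the extended jump-set $$\lambda_{\mathrm{ext}}=\{x\in\mu_2:\ \exists t\ge 0 \text{ such that the solution of the vector field starting at } x \text{ lies in } \lambda \text{ at time } t\}.$$ If the equilibrium point $x_e$ is strictly included in $\lambda$, then $\lambda_{\mathrm{ext}}=\mu_2$; in particular the equilibrium point can be reached.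
   Context: Setting: a phase $l_i$ of a hybrid automaton has continuous dynamics given by the vector field above, and a phase constraint $\mu_2(l_i)=\mu_2$ (a box with faces orthogonal to the coordinate axes). The jump-set from phase $l_i$ to the next phase $l_{i+1}$ is $\lambda=\mu_2(l_i)\cap \mu_3^{-1}(X)$, where $\mu_3$ is the reset map of the transition and $X$ is the target set in phase $l_{i+1}$; in particular $\lambda\subseteq\mu_2$. ''Strictly included'' means $x_e$ lies in the interior of $\lambda$. *)

From HB Require Import structures.
From mathcomp Require Import all_boot all_order all_algebra.
From mathcomp Require Import all_classical all_reals all_analysis.
Set Implicit Arguments. Unset Strict Implicit. Unset Printing Implicit Defensive.
Import Order.TTheory GRing.Theory Num.Theory.
Import numFieldNormedType.Exports.
Local Open Scope classical_set_scope.
Local Open Scope ring_scope.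

Definition linfield (R : realType) (n : nat) (a b : 'I_n -> R)
  (x : 'rV[R]_n) : 'rV[R]_n := \row_j (- a j * x ord0 j + b j).

Definition equilibrium (R : realType) (n : nat) (a b : 'I_n -> R) : 'rV[R]_n :=
  \row_j (b j / a j).

Definition is_solution (R : realType) (n : nat) (a b : 'I_n -> R)
  (x : 'rV[R]_n) (phi : R -> 'rV[R]_n) : Prop :=
  phi 0 = x /\ forall t : R, is_derive t (1 : R) phi (linfield a b (phi t)).

Definition box (R : realType) (n : nat) (xmin xmax : 'I_n -> R) : set 'rV[R]_n :=
  [set x | forall j, xmin j <= x ord0 j <= xmax j].

Definition ext_jump_set (R : realType) (n : nat) (a b : 'I_n -> R)
  (mu2 lam : set 'rV[R]_n) : set 'rV[R]_n :=
  [set x | mu2 x /\ exists phi, is_solution a b x phi /\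
                    exists t : R, 0 <= t /\ lam (phi t)].

From HB Require Import structures.
From mathcomp Require Import all_boot all_order all_algebra.
From mathcomp Require Import all_classical all_reals all_analysis.
From mathcomp Require Import ring.
Import Order.TTheory GRing.Theory Num.Theory.
Import numFieldNormedType.Exports.
Local Open Scope classical_set_scope.
Local Open Scope ring_scope.
Set Implicit Arguments. Unset Strict Implicit. Unset Printing Implicit Defensive.

(* Since the field is decoupled, its flow is explicit: coordinate j relaxes
   exponentially, x_j(t) = b_j/a_j + (x_j - b_j/a_j) e^{-a_j t}.  With every
   a_j > 0 the flow from any initial point tends to x_e, so it eventually
   enters every neighbourhood of x_e, in particular the jump-set lambda. *)

Lemma cvgy_pmull (R : realType) (c : R) : 0 < c ->
  c * t @[t --> +oo] --> +oo.
Proof.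
move=> c0; apply/cvgryPge => A; near=> t.
by rewrite -ler_pdivrMl //; near: t; apply: nbhs_pinfty_ge; rewrite num_real.
Unshelve. all: by end_near.
Qed.

Lemma cvgy_expRNM (R : realType) (c : R) : 0 < c ->
  expR (- c * t) @[t --> +oo] --> 0.
Proof.
move=> c0; under eq_fun do rewrite mulNr.
exact: (cvg_comp _ (fun x => expR (- x)) (cvgy_pmull c0) (@cvgr_expR R)).
Qed.

Lemma is_derive_relax (R : realType) (c x0 d t : R) :
  is_derive t 1 (fun s => x0 + d * expR (- c * s)) (- c * (d * expR (- c * t))).
Proof.
have lin : is_derive t (1 : R) (fun s : R => - c * s) (- c).
  by have := is_deriveZ (- c) (is_derive_id t (1 : R)); rewrite /GRing.scale /= mulr1.
rewrite (_ : - c * (d * expR (- c * t)) = 0 + d * (expR (- c * t) * - c)); last by ring.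
exact: is_deriveD (is_derive_cst x0 t 1) (is_deriveZ d (is_derive1_comp (is_derive_expR _) lin)).
Qed.

Definition linflow (R : realType) (n : nat) (a b : 'I_n -> R) (x : 'rV[R]_n) (t : R)
  : 'rV[R]_n := \row_j (b j / a j + (x ord0 j - b j / a j) * expR (- a j * t)).

Lemma linflow_is_solution (R : realType) (n : nat) (a b : 'I_n -> R) (x : 'rV[R]_n) :
  (forall j, a j != 0) -> is_solution a b x (linflow a b x).
Proof.
move=> a_neq0; split.
  by apply/rowP => j; rewrite mxE mulr0 expR0 mulr1 addrC subrK.
move=> t.
have entry i j : (fun s => linflow a b x s i j) =
    (fun s => b j / a j + (x ord0 j - b j / a j) * expR (- a j * s)).
  by apply/funext => s; rewrite mxE.
have dflow : derivable (linflow a b x) t 1.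
  apply/derivable_mxP => i j; rewrite entry.
  by case: (is_derive_relax (a j) (b j / a j) (x ord0 j - b j / a j) t).
apply: DeriveDef => //; rewrite derive_mx //.
apply/matrixP => i j; rewrite !mxE entry derive_val.
rewrite add0r mul1r /GRing.scale /= mulr1; field; exact: a_neq0.
Qed.

Lemma linflow_cvgy (R : realType) (n : nat) (a b : 'I_n -> R) (x : 'rV[R]_n) :
  (forall j, 0 < a j) -> linflow a b x t @[t --> +oo] --> equilibrium a b.
Proof.
move=> a_gt0; apply/cvg_ballP => e e0.
have entry_near i j :
    \forall t \near +oo, ball (equilibrium a b i j) e (linflow a b x t i j).
  have : b j / a j + (x ord0 j - b j / a j) * expR (- a j * t) @[t --> +oo] -->
         b j / a j + (x ord0 j - b j / a j) * 0.
    exact: cvgD (cvg_cst _) (cvgM (cvg_cst _) (cvgy_expRNM (a_gt0 j))).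
  rewrite mulr0 addr0 => /cvg_ballP/(_ e e0) near_j.
  by apply: filterS near_j => t; rewrite !mxE.
by apply: filterS (filter_forall _ (fun i => filter_forall _ (entry_near i))) => t; split.
Qed.

Theorem theorem2 (R : realType) (n : nat) (hn : (2 <= n)%N)
  (a b : 'I_n -> R) (ha : forall j, 0 < a j)
  (xmin xmax : 'I_n -> R) (lam : set 'rV[R]_n)
  (hlam : lam `<=` box xmin xmax)
  (hxe : interior lam (equilibrium a b)) :
  ext_jump_set a b (box xmin xmax) lam = box xmin xmax.
Proof.
apply/seteqP; split=> [x [] // | x box_x]; split=> //.
exists (linflow a b x); split.
  by apply: linflow_is_solution => j; rewrite lt0r_neq0.
have lam_near : \forall t \near +oo, lam (linflow a b x t).
  exact: linflow_cvgy ha _ hxe.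
have near_both : \forall t \near +oo, 0 <= t /\ lam (linflow a b x t).
  by apply/near_andP; split=> //; exact: nbhs_pinfty_ge.
have [t [t_ge0 lam_t]] := filter_ex near_both.
by exists t.
Qed.
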